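(* Let $D$ be a strongly connected digraph of order $n\ge 2$ and girth $g$. Then $\chi_A(D)\le \left\lceil\frac{n}{g-1}\right\rceil$.
   Context: Digraphs are finite and loopless; cycles are directed. Girth is the length of a shortest directed cycle. $\chi_A(D)$ is the minimum number of colors in a vertex coloring of $D$ in which every color class induces an acyclic subdigraph. *)

From Stdlib Require Import ClassicalEpsilon.
From mathcomp Require Import all_boot.
Set Implicit Arguments. Unset Strict Implicit. Unset Printing Implicit Defensive.

Record digraph := Digraph {
  vtx : finType;
  arc : rel vtx;
  arc_irr : irreflexive arc }.

(* A directed cycle: a nonempty sequence of distinct vertices v_0 ... v_{k-1}
   with arcs v_i -> v_{i+1} and v_{k-1} -> v_0.  Its length is [size s]. *)
Definition dcycle (D : digraph) (s : seq (vtx D)) : bool :=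
  [&& s != [::], uniq s & cycle (@arc D) s].

Definition is_girth (D : digraph) (g : nat) : Prop :=
  (exists s, @dcycle D s /\ size s = g) /\ (forall s, @dcycle D s -> g <= size s).

Definition strongly_connected (D : digraph) : Prop :=
  forall x y : vtx D, connect (@arc D) x y.

Definition induces_acyclic (D : digraph) (A : pred (vtx D)) : Prop :=
  forall s, @dcycle D s -> ~ all A s.

Definition acyclic_colorable (D : digraph) (k : nat) : Prop :=
  exists f : vtx D -> 'I_k, forall i : 'I_k, @induces_acyclic D (fun x => f x == i).

Definition pb (P : Prop) : bool :=
  if excluded_middle_informative P then true else false.

Lemma pbP (P : Prop) : reflect P (pb P).
Proof. rewrite /pb; case: excluded_middle_informative => h; by constructor. Qed.


Lemma acyclic_colorable_ex (D : digraph) : exists k, pb (acyclic_colorable D k).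
Proof.
exists #|vtx D|; apply/pbP; exists (@enum_rank (vtx D)) => i s /and3P [s0 us cs] /allP hs.
case: s s0 us cs hs => [|x [|y s]] //= _.
- by rewrite andbT (@arc_irr D).
- move=> /andP [nxy _] _ h; move/negP: nxy; apply.
  have /eqP hx := h x (mem_head _ _).
  have /eqP hy : enum_rank y == i by apply: h; rewrite !inE eqxx orbT.
  by rewrite inE -(enum_rankK x) -(enum_rankK y) hx hy eqxx.
Qed.

Definition chiA (D : digraph) : nat := ex_minn (acyclic_colorable_ex D).

Definition ceil_div (n m : nat) : nat := n %/ m + (n %% m != 0).

(* A directed cycle lying in a vertex set A has at most #|A| vertices, so any
   coloring whose classes have at most g - 1 vertices is acyclic.  Numbering
   the vertices 0, ..., n - 1 and cutting them into consecutive blocks of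
   g - 1 gives such a coloring with ceil(n / (g - 1)) colors. *)
From mathcomp Require Import all_boot.
From mathcomp Require Import zify.

Set Implicit Arguments.
Unset Strict Implicit.
Unset Printing Implicit Defensive.

Lemma ltn_div_ceil_div (a n m : nat) : 0 < m -> a < n -> a %/ m < ceil_div n m.
Proof.
move=> m_gt0 lt_an; rewrite /ceil_div ltnNge; apply/negP => le_ceil.
have := divn_eq a m; have := divn_eq n m; have := ltn_pmod n m_gt0.
have : ceil_div n m * m <= a %/ m * m by rewrite leq_mul2r le_ceil orbT.
rewrite /ceil_div; case: eqP => /= [-> | _]; lia.
Qed.

Lemma card_div_fiber (T : finType) (m i : nat) : 0 < m ->
  #|[pred x : T | enum_rank x %/ m == i]| <= m.
Proof.
move=> m_gt0; set fiber := [pred x : T | _]; rewrite cardE.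
rewrite -(size_map (fun x => nat_of_ord (enum_rank x))) -[X in _ <= X](size_iota (i * m)).
apply: uniq_leq_size.
  by rewrite map_inj_uniq ?enum_uniq // => x y /val_inj /enum_rank_inj.
move=> j /mapP [x]; rewrite mem_enum inE => /eqP <- ->.
rewrite mem_iota; set r := nat_of_ord (enum_rank x).
have := divn_eq r m; have := ltn_pmod r m_gt0; lia.
Qed.

Section AcyclicColoring.

Variable D : digraph.

Lemma dcycle_size_gt1 (s : seq (vtx D)) : dcycle s -> 1 < size s.
Proof.
by case: s => [|x [|y s]] //; rewrite /dcycle /= andbT (@arc_irr D).
Qed.

Lemma girth_gt1 (g : nat) : is_girth D g -> 1 < g.
Proof. by move=> [[s [cs <-]] _]; exact: dcycle_size_gt1. Qed.

Lemma dcycle_size_le_card (s : seq (vtx D)) (A : pred (vtx D)) :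
  dcycle s -> all A s -> size s <= #|A|.
Proof.
move=> /and3P [_ us _] /allP sA; rewrite -(card_uniqP us).
by apply/subset_leq_card/subsetP.
Qed.

Lemma induces_acyclic_card (g : nat) (A : pred (vtx D)) :
  (forall s, @dcycle D s -> g <= size s) -> #|A| < g -> induces_acyclic A.
Proof.
move=> girth_g card_A s cs sA.
by have := leq_trans (girth_g s cs) (dcycle_size_le_card cs sA); rewrite leqNgt card_A.
Qed.

Lemma chiA_min (k : nat) : acyclic_colorable D k -> chiA D <= k.
Proof. by move=> colk; rewrite /chiA; case: ex_minnP => c _; apply; apply/pbP. Qed.

Lemma chiA_le_ceil_div (g : nat) :
  is_girth D g -> chiA D <= ceil_div #|vtx D| (g - 1).
Proof.
move=> girth_g; have g_gt1 := girth_gt1 girth_g.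
have m_gt0 : 0 < g - 1 by rewrite subn_gt0.
have block_lt (x : vtx D) : enum_rank x %/ (g - 1) < ceil_div #|vtx D| (g - 1).
  by apply: ltn_div_ceil_div; rewrite // -cardE ltn_ord.
apply: chiA_min; exists (fun x => Ordinal (block_lt x)) => i.
apply: induces_acyclic_card girth_g.2 _.
apply: leq_ltn_trans (card_div_fiber (vtx D) i m_gt0) _.
by rewrite ltn_subrL (ltnW g_gt1).
Qed.

End AcyclicColoring.

Theorem mainTheorem17 (D : digraph) (g : nat) :
  strongly_connected D -> 2 <= #|vtx D| -> is_girth D g ->
  chiA D <= ceil_div #|vtx D| (g - 1).
Proof. by move=> _ _; exact: chiA_le_ceil_div. Qed.
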